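(* Let $R=(r_{st})$ be an $n\times n$ matrix over the complex numbers ($n\ge 2$). For $1\le i,j\le n$ let $R_{ij}$ be the matrix obtained from $R$ by replacing the $(i,j)$ entry by $0$ (all other entries unchanged). Then $$(n^2-n)\,d_2(R)=\sum_{1\le i,j\le n} d_2(R_{ij}).$$
   Context: For an $n\times n$ matrix $M=(m_{ij})$ ($n\ge 2$), the second immanant is $d_2(M)=\sum_{\sigma\in S_n}\chi_2(\sigma)\prod_{s=1}^n m_{s\sigma(s)}$, where $\chi_2$ is the irreducible character of the symmetric group $S_n$ corresponding to the partition $(2,1^{n-2})$. *)

From HB Require Import structures.
From mathcomp Require Import all_boot all_order all_algebra all_fingroup.
Set Implicit Arguments. Unset Strict Implicit. Unset Printing Implicit Defensive.
Import GRing.Theory Num.Theory.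
Local Open Scope ring_scope.

(* The irreducible character of S_n for the partition (2,1^{n-2}):
   it is the sign character tensored with the standard character
   (partition (n-1,1)), whose value is (number of fixed points - 1). *)
Definition chi2 (C : numClosedFieldType) (n : nat) (s : 'S_n) : C :=
  (-1) ^+ (odd_perm s) * ((#|[set i : 'I_n | s i == i]|)%:R - 1).

Definition d2 (C : numClosedFieldType) (n : nat) (M : 'M[C]_n) : C :=
  \sum_(s : 'S_n) chi2 C s * \prod_(i < n) M i (s i).

Definition zero_entry (C : numClosedFieldType) (n : nat) (R : 'M[C]_n)
  (i j : 'I_n) : 'M[C]_n :=
  \matrix_(s, t) (if (s == i) && (t == j) then 0 else R s t).

(* Zeroing the entry (i, j) of R kills exactly the terms of an immanant whose
   permutation s has s(i) = j and leaves the others unchanged.  Each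
   permutation s therefore survives in exactly n(n-1) of the matrices R_ij
   (those with j <> s(i)), so the identity holds for every immanant, whatever
   its character, and for every n. *)

From HB Require Import structures.
From mathcomp Require Import all_boot all_order all_algebra all_fingroup.
Set Implicit Arguments. Unset Strict Implicit. Unset Printing Implicit Defensive.
Import GRing.Theory Num.Theory.
Local Open Scope ring_scope.

Definition immanant (C : numClosedFieldType) (n : nat) (f : 'S_n -> C)
  (M : 'M[C]_n) : C :=
  \sum_(s : 'S_n) f s * \prod_(i < n) M i (s i).

Lemma d2_immanant (C : numClosedFieldType) (n : nat) (M : 'M[C]_n) :
  d2 M = immanant (@chi2 C n) M.
Proof. by []. Qed.

Lemma sumr_neq (R : pzSemiRingType) (n : nat) (a : 'I_n) :
  \sum_(j < n) ((a != j)%:R : R) = (n - 1)%:R.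
Proof.
rewrite (bigD1 a) //= eqxx add0r.
rewrite (eq_bigr (fun _ => 1)); last by move=> j; rewrite eq_sym => /negbTE ->.
by rewrite sumr_const cardC1 card_ord subn1.
Qed.

Lemma prod_zero_entry (C : numClosedFieldType) (n : nat) (R : 'M[C]_n)
    (s : 'S_n) (i j : 'I_n) :
  \prod_(k < n) zero_entry R i j k (s k) = (s i != j)%:R * \prod_(k < n) R k (s k).
Proof.
have [sij|sij] := eqVneq (s i) j.
  by rewrite mul0r (bigD1 i) //= mxE eqxx sij eqxx mul0r.
rewrite mul1r; apply: eq_bigr => k _; rewrite mxE.
by case: eqVneq => [->|//]; rewrite (negbTE sij).
Qed.

Lemma sum_immanant_zero_entry (C : numClosedFieldType) (n : nat)
    (f : 'S_n -> C) (R : 'M[C]_n) :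
  \sum_(i < n) \sum_(j < n) immanant f (zero_entry R i j)
  = (n * (n - 1))%:R * immanant f R.
Proof.
rewrite /immanant mulr_sumr.
under eq_bigr => i _ do rewrite exchange_big /=.
rewrite exchange_big /=; apply: eq_bigr => s _.
have survivors : \sum_(i < n) \sum_(j < n) ((s i != j)%:R : C) = (n * (n - 1))%:R.
  under eq_bigr => i _ do rewrite sumr_neq.
  by rewrite sumr_const card_ord -mulrnA mulnC.
rewrite -survivors mulr_suml; apply: eq_bigr => i _.
rewrite mulr_suml; apply: eq_bigr => j _.
by rewrite prod_zero_entry mulrCA.
Qed.

Theorem lemma3p3 (C : numClosedFieldType) (n : nat) (hn : (2 <= n)%N)
  (R : 'M[C]_n) :
  ((n ^ 2 - n)%N)%:R * d2 R
  = \sum_(i < n) \sum_(j < n) d2 (zero_entry R i j).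
Proof.
under eq_bigr => i _ do under eq_bigr => j _ do rewrite d2_immanant.
by rewrite sum_immanant_zero_entry d2_immanant mulnBr muln1 mulnn.
Qed.
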